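(* Let $\mathbf P\subset\mathbb Z^n$ be finite with $P=\operatorname{Conv}\mathbf P$, and let $D$ be a daughter polytope of $\mathbf P$ with associated set $\mathcal D=\mathcal D(D)$. Let $W\in\mathcal D$ and let $S$ be a face of $P$ with $S\subset W$. Then for every $W'\in\mathcal D\setminus\{W\}$, the projection $\pi_S(W')$ does not intersect $\mathbf P_S$.
   Context: **Quotient projection.** $\pi_S:\mathbb R^n\to\mathbb R^n/\operatorname{aff}(S)$ sends $\operatorname{aff}(S)$ to the origin. **Daughter polytope.** For a nonempty polytope $D$ with vertices in $\mathbf P$, $\mathcal D(D)$ is the set of inclusion-maximal faces $F$ of $P$ with $D\cap F=\emptyset$. $D$ is a daughter polytope of $\mathbf P$ if: 1. distinct faces in $\mathcal D(D)$ are pairwise disjoint; 2. $D=\operatorname{Conv}(\mathbf P\setminus\bigcup_{F\in\mathcal D(D)}F)$. **The set $\mathbf P_S$.** For a face $S$ of $P$: $$\mathbf P_S=\pi_S(\mathbf P)\cap\overline{\pi_S(P)\setminus\pi_S(\operatorname{Conv}(\mathbf P\setminus S))},$$ where the overline denotes topological closure. *)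

From HB Require Import structures.
From mathcomp Require Import all_boot all_order all_algebra.
From mathcomp Require Import all_classical all_reals all_analysis.
Set Implicit Arguments. Unset Strict Implicit. Unset Printing Implicit Defensive.
Import Order.TTheory GRing.Theory Num.Theory.
Import numFieldNormedType.Exports.
Local Open Scope classical_set_scope.
Local Open Scope ring_scope.

Section PolytopeDefs.
Variable R : realType.

Definition pconv (n : nat) (A : set 'rV[R]_n) : set 'rV[R]_n :=
  [set x | exists (k : nat) (w : 'I_k -> R) (p : 'I_k -> 'rV[R]_n),
      (forall i, 0 <= w i) /\ (\sum_(i < k) w i = 1) /\
      (forall i, A (p i)) /\ x = \sum_(i < k) w i *: p i].

Definition paff (n : nat) (A : set 'rV[R]_n) : set 'rV[R]_n :=
  [set x | exists (k : nat) (w : 'I_k -> R) (p : 'I_k -> 'rV[R]_n),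
      (\sum_(i < k) w i = 1) /\
      (forall i, A (p i)) /\ x = \sum_(i < k) w i *: p i].

Definition aff_dir (n : nat) (A : set 'rV[R]_n) : set 'rV[R]_n :=
  [set x - y | x in paff A & y in paff A].

Definition pdot (n : nat) (c x : 'rV[R]_n) : R := \sum_(i < n) c 0 i * x 0 i.

(* F is a face of the polytope P: the intersection of P with a (weakly)
   supporting hyperplane {x | c.x = d} with c.y <= d on P
   (c = 0 allowed, so P itself and the empty set are faces). *)
Definition is_pface (n : nat) (P F : set 'rV[R]_n) : Prop :=
  exists (c : 'rV[R]_n) (d : R),
    (forall y, P y -> pdot c y <= d) /\
    F = [set x | P x /\ pdot c x = d].

(* pi is (a concrete model of) the quotient projection
   R^n -> R^n / paff(S) sending paff(S) to the origin: pi = f(. - s) with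
   s in paff S and f a linear surjection R^n -> R^m whose kernel is exactly
   the direction of paff S (so R^m is identified with R^n / dir(paff S)). *)
Definition quot_proj (n m : nat) (S : set 'rV[R]_n)
    (pi : 'rV[R]_n -> 'rV[R]_m) : Prop :=
  exists (f : {linear 'rV[R]_n -> 'rV[R]_m}) (s : 'rV[R]_n),
    paff S s /\
    (forall y, exists x, f x = y) /\
    (forall x, f x = 0 <-> aff_dir S x) /\
    (forall x, pi x = f (x - s)).

Definition dfaces (n : nat) (Pts D : set 'rV[R]_n) : set (set 'rV[R]_n) :=
  [set F | is_pface (pconv Pts) F /\ D `&` F = set0 /\
     (forall G, is_pface (pconv Pts) G -> D `&` G = set0 -> F `<=` G -> G = F)].

Definition is_daughter (n : nat) (Pts D : set 'rV[R]_n) : Prop :=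
  (exists V, V `<=` Pts /\ D = pconv V) /\ D !=set0 /\
  (forall F G, dfaces Pts D F -> dfaces Pts D G -> F <> G -> F `&` G = set0) /\
  D = pconv (Pts `\` \bigcup_(F in dfaces Pts D) F).

Definition PS_set (n m : nat) (Pts S : set 'rV[R]_n)
    (pi : 'rV[R]_n -> 'rV[R]_m) : set 'rV[R]_m :=
  (pi @` Pts) `&`
  closure ((pi @` pconv Pts) `\` (pi @` pconv (Pts `\` S))).

End PolytopeDefs.

From HB Require Import structures.
From mathcomp Require Import all_boot all_order all_algebra.
From mathcomp Require Import all_classical all_reals all_analysis.
Import Order.TTheory GRing.Theory Num.Theory.
Import numFieldNormedType.Exports.
Local Open Scope classical_set_scope.
Local Open Scope ring_scope.

Set Implicit Arguments. Unset Strict Implicit. Unset Printing Implicit Defensive.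

(* Fix w' in W'.  If -pi(w') lies in the cone spanned by the vectors
   pi(v) - pi(w'), v in P \ S, then, since a finitely generated cone admits
   representations whose coefficients are bounded linearly by the norm, every
   point of pi(P) near pi(w') is a convex combination of pi(w') and the pi(v),
   v in P \ S; so pi(w') is not in the closure defining P_S.  Otherwise Farkas'
   lemma gives a functional separating -pi(w') from that cone; pulled back and
   added, suitably scaled, to the functional defining W', it tilts W' into a
   face of P that still contains w', touches S (a subset of W) and has all its
   vertices in S u W'.  Such a face misses D, hence lies in a single member of
   D(D), which would have to be both W and W'. *)

Section Pdot.
Variable R : realType.

Lemma pdotDr m (c x y : 'rV[R]_m) : pdot c (x + y) = pdot c x + pdot c y.
Proof. by rewrite /pdot -big_split /=; apply: eq_bigr => i _; rewrite mxE mulrDr. Qed.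

Lemma pdotZr m (c x : 'rV[R]_m) a : pdot c (a *: x) = a * pdot c x.
Proof. by rewrite /pdot mulr_sumr; apply: eq_bigr => i _; rewrite mxE mulrCA. Qed.

Lemma pdotDl m (c d x : 'rV[R]_m) : pdot (c + d) x = pdot c x + pdot d x.
Proof. by rewrite /pdot -big_split /=; apply: eq_bigr => i _; rewrite mxE mulrDl. Qed.

Lemma pdotZl m (c x : 'rV[R]_m) a : pdot (a *: c) x = a * pdot c x.
Proof. by rewrite /pdot mulr_sumr; apply: eq_bigr => i _; rewrite mxE mulrA. Qed.

Lemma pdot0r m (c : 'rV[R]_m) : pdot c 0 = 0.
Proof. by rewrite /pdot big1 // => i _; rewrite mxE mulr0. Qed.

Lemma pdotNr m (c x : 'rV[R]_m) : pdot c (- x) = - pdot c x.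
Proof. by rewrite -scaleN1r pdotZr mulN1r. Qed.

Lemma pdotBr m (c x y : 'rV[R]_m) : pdot c (x - y) = pdot c x - pdot c y.
Proof. by rewrite pdotDr pdotNr. Qed.

Lemma pdotNl m (c x : 'rV[R]_m) : pdot (- c) x = - pdot c x.
Proof. by rewrite -scaleN1r pdotZl mulN1r. Qed.

Lemma pdotBl m (c d x : 'rV[R]_m) : pdot (c - d) x = pdot c x - pdot d x.
Proof. by rewrite pdotDl pdotNl. Qed.

Lemma pdot_sumr m I (r : seq I) (P : pred I) (c : 'rV[R]_m) (F : I -> 'rV[R]_m) :
  pdot c (\sum_(i <- r | P i) F i) = \sum_(i <- r | P i) pdot c (F i).
Proof.
elim/big_rec2: _ => [|i y1 y2 _ <-]; first by rewrite pdot0r.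
by rewrite pdotDr.
Qed.

Lemma pdot_self_gt0 m (b : 'rV[R]_m) : b != 0 -> 0 < pdot b b.
Proof.
move=> b_neq0; rewrite /pdot.
have [j bj] : exists j, b 0 j != 0.
  apply/existsP; apply: contraR b_neq0 => /existsPn b0; apply/eqP/rowP => j.
  by rewrite mxE; move: (b0 j); rewrite negbK => /eqP.
rewrite (bigD1 j) //=; apply: ltr_pwDl; first by rewrite -expr2 exprn_even_gt0 // bj orbT.
by apply: sumr_ge0 => i _; rewrite -expr2 sqr_ge0.
Qed.

Lemma pdot_comb m (c : 'rV[R]_m) k (w : 'I_k -> R) (p : 'I_k -> 'rV[R]_m) :
  pdot c (\sum_i w i *: p i) = \sum_i w i * pdot c (p i).
Proof. by rewrite pdot_sumr; apply: eq_bigr => i _; rewrite pdotZr. Qed.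

Lemma pdot_comb_le m (c : 'rV[R]_m) d k (w : 'I_k -> R) p :
  (forall i, 0 <= w i) -> \sum_i w i = 1 -> (forall i, pdot c (p i) <= d) ->
  pdot c (\sum_i w i *: p i) <= d.
Proof.
move=> w_ge0 w1 c_le; rewrite pdot_comb -[leRHS]mul1r -w1 mulr_suml.
by apply: ler_sum => i _; rewrite ler_wpM2l.
Qed.

Lemma pdot_comb_const m (c : 'rV[R]_m) d k (w : 'I_k -> R) p :
  \sum_i w i = 1 -> (forall i, pdot c (p i) = d) -> pdot c (\sum_i w i *: p i) = d.
Proof.
move=> w1 c_eq; rewrite pdot_comb -[RHS]mul1r -w1 mulr_suml.
by apply: eq_bigr => i _; rewrite c_eq.
Qed.

Lemma pdot_comb_eq_bound m (c : 'rV[R]_m) d k (w : 'I_k -> R) p :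
  (forall i, 0 <= w i) -> \sum_i w i = 1 -> (forall i, pdot c (p i) <= d) ->
  pdot c (\sum_i w i *: p i) = d -> forall i, 0 < w i -> pdot c (p i) = d.
Proof.
move=> w_ge0 w1 c_le c_eq i w_i.
have gap0 : \sum_i w i * (d - pdot c (p i)) = 0.
  under eq_bigr do rewrite mulrBr.
  by rewrite sumrB -mulr_suml w1 mul1r -pdot_comb c_eq subrr.
have gap_ge0 j : predT j -> 0 <= w j * (d - pdot c (p j)).
  by move=> _; rewrite mulr_ge0 // subr_ge0.
have /eqP := psumr_eq0P gap_ge0 gap0 (isT : predT i).
by rewrite mulf_eq0 (gt_eqF w_i) /= subr_eq0 => /eqP <-.
Qed.

Lemma pdot_adjoint n m (f : {linear 'rV[R]_n -> 'rV[R]_m}) (y : 'rV[R]_m) :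
  exists c : 'rV[R]_n, forall x, pdot c x = pdot y (f x).
Proof.
exists (\row_j pdot y (f (delta_mx 0 j))) => x.
rewrite {2}(row_sum_delta x) linear_sum pdot_sumr [LHS]/pdot; apply: eq_bigr => j _.
by rewrite mxE linearZ /= pdotZr mulrC.
Qed.

End Pdot.

Section Cones.
Variables (R : realType) (m : nat).

Definition in_cone N (g : 'I_N -> 'rV[R]_m) (u : 'rV[R]_m) :=
  exists mu : 'I_N -> R, (forall i, 0 <= mu i) /\ u = \sum_i mu i *: g i.

Lemma in_cone_gen N (g : 'I_N -> 'rV[R]_m) i : in_cone g (g i).
Proof.
exists (fun j => (j == i)%:R); split=> [j|]; first by rewrite ler0n.
rewrite (bigD1 i) //= eqxx scale1r big1 ?addr0 // => j /negbTE ->.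
exact: scale0r.
Qed.

Lemma in_cone_comb N (g : 'I_N -> 'rV[R]_m) k (w : 'I_k -> R) (u : 'I_k -> 'rV[R]_m) :
  (forall i, 0 <= w i) -> (forall i, in_cone g (u i)) -> in_cone g (\sum_i w i *: u i).
Proof.
move=> w_ge0 u_cone.
have cone0 : in_cone g 0.
  by exists (fun=> 0); split=> //; rewrite big1 // => i _; rewrite scale0r.
apply: big_ind => // [_ _ [a [a_ge0 ->]] [b [b_ge0 ->]]|i _].
  exists (fun j => a j + b j); split=> [j|]; first by rewrite addr_ge0.
  by rewrite -big_split; apply: eq_bigr => j _; rewrite scalerDl.
have [a [a_ge0 ->]] := u_cone i.
exists (fun j => w i * a j); split=> [j|]; first by rewrite mulr_ge0.
by rewrite scaler_sumr; apply: eq_bigr => j _; rewrite scalerA.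
Qed.

Lemma in_cone_lift0 N (g : 'I_N.+1 -> 'rV[R]_m) b mu0 :
  0 <= mu0 -> in_cone (fun i => g (lift ord0 i)) (b - mu0 *: g ord0) -> in_cone g b.
Proof.
move=> mu0_ge0 [mu [mu_ge0 b_mu]].
exists (fun i => if unlift ord0 i is Some j then mu j else mu0); split.
  by move=> i; case: unliftP.
rewrite big_ord_recl /= unlift_none -[b](subrK (mu0 *: g ord0)) b_mu addrC.
by congr (_ + _); apply: eq_bigr => i _; rewrite liftK.
Qed.

Lemma farkas N (g : 'I_N -> 'rV[R]_m) (b : 'rV[R]_m) :
  in_cone g b \/ exists y, (forall i, pdot y (g i) <= 0) /\ 0 < pdot y b.
Proof.
elim: N g b => [|N IH] g b.
  have [->|b_neq0] := eqVneq b 0.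
    by left; exists (fun=> 0); split=> //; rewrite big_ord0.
  by right; exists b; split; [case|exact: pdot_self_gt0].
pose a := g ord0; pose g' i := g (lift ord0 i).
have [b_cone|[y1 [y1_g' y1_b]]] := IH g' b.
  by left; apply: (@in_cone_lift0 _ _ _ 0) => //; rewrite scale0r subr0.
have [y1_a|t_gt0] := lerP (pdot y1 a) 0.
  by right; exists y1; split=> // i; case: (unliftP ord0 i) => [j ->|->];
    [exact: y1_g'|exact: y1_a].
set t := pdot y1 a in t_gt0.
have t_neq0 : t != 0 by rewrite gt_eqF.
(* project the problem onto the hyperplane [y1 = 0] along [a] *)
pose proj v := v - (pdot y1 v / t) *: a.
have [[mu [mu_ge0 b_mu]]|[y2 [y2_g y2_b]]] := IH (fun i => proj (g' i)) (proj b).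
  left; apply: (@in_cone_lift0 _ _ _ (pdot y1 b / t - \sum_i mu i * (pdot y1 (g' i) / t))).
    rewrite subr_ge0; apply: (@le_trans _ _ 0); last by rewrite divr_ge0 // ltW.
    by apply: sumr_le0 => i _; rewrite mulr_ge0_le0 // pmulr_lle0 ?invr_gt0.
  exists mu; split=> //.
  rewrite scalerBl opprB addrA addrAC -/a -/(proj b) b_mu scaler_suml -big_split /=.
  by apply: eq_bigr => i _; rewrite -scalerA -scalerDr /proj subrK.
pose y := y2 - (pdot y2 a / t) *: y1.
have y_a : pdot y a = 0 by rewrite pdotBl pdotZl -/t divfK // subrr.
have y_proj v : pdot y v = pdot y2 (proj v).
  rewrite /proj pdotBl pdotZl pdotBr pdotZr; congr (_ - _).
  by rewrite mulrAC [RHS]mulrAC [pdot y2 a * _]mulrC.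
right; exists y; split; last by rewrite y_proj.
by move=> i; case: (unliftP ord0 i) => [j ->|->]; [rewrite y_proj; exact: y2_g|rewrite -/a y_a].
Qed.

Lemma coef_le_norm (v : 'rV[R]_m) j : `|v 0 j| <= `|v|.
Proof.
rewrite [leRHS]/Num.Def.normr /= mx_normrE.
by apply/bigmax_geP; right; exists (0, j).
Qed.

Definition cone_bound_on N (g : 'I_N -> 'rV[R]_m) (T : {set 'I_N}) (C : R) :=
  forall gam : 'I_N -> R, (forall i, 0 <= gam i) -> (forall i, i \notin T -> gam i = 0) ->
  exists gam' : 'I_N -> R, (forall i, 0 <= gam' i) /\ (forall i, i \notin T -> gam' i = 0) /\
    \sum_i gam' i *: g i = \sum_i gam i *: g i /\
    \sum_i gam' i <= C * `|\sum_i gam i *: g i|.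

Lemma cone_bound_on_free N (g : 'I_N -> 'rV[R]_m) (T : {set 'I_N}) :
  (forall dl : 'I_N -> R, (forall i, i \notin T -> dl i = 0) ->
     \sum_i dl i *: g i = 0 -> forall i, dl i = 0) ->
  exists C, 0 <= C /\ cone_bound_on g T C.
Proof.
move=> free_T.
pose G := \matrix_(i < N) (if i \in T then g i else 0).
exists (\sum_i \sum_j `|pinvmx G j i|); split.
  by apply: sumr_ge0 => i _; apply: sumr_ge0.
move=> gam gam_ge0 gamT; exists gam; split=> //; split=> //; split=> //.
set y := \sum_i gam i *: g i.
have yG : y = (\row_i gam i) *m G.
  rewrite mulmx_sum_row /y; apply: eq_bigr => i _; rewrite rowK mxE.
  by case: ifP => // /negbT /gamT ->; rewrite !scale0r.
(* the coefficients are recovered linearly from [y] through a pseudo-inverse *)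
pose gr i := if i \in T then (y *m pinvmx G) 0 i else 0.
have gr_y : \sum_i gr i *: g i = y.
  rewrite {1}yG -(mulmxKpV (submxMl (\row_i gam i) G)) -yG mulmx_sum_row.
  by apply: eq_bigr => i _; rewrite rowK /gr; case: ifP => _; rewrite ?scale0r ?scaler0.
have gam_gr i : gam i = gr i.
  apply/eqP; rewrite -subr_eq0; apply/eqP; apply: (free_T (fun i => gam i - gr i)).
    by move=> j jT; rewrite gamT // /gr (negbTE jT) subrr.
  by under eq_bigr do rewrite scalerBl; rewrite sumrB gr_y subrr.
rewrite (eq_bigr gr) // big_distrl /=; apply: ler_sum => i _.
rewrite /gr; case: ifP => _; last by apply: mulr_ge0 => //; apply: sumr_ge0.
rewrite mxE big_distrl /=; apply: le_trans (ler_norm _) _.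
apply: le_trans (ler_norm_sum _ _ _) _; apply: ler_sum => j _.
by rewrite normrM mulrC ler_wpM2l // coef_le_norm.
Qed.

Lemma cone_bound_on_kernel N (g : 'I_N -> 'rV[R]_m) (T : {set 'I_N}) (dl Cs : 'I_N -> R) i1 :
  (forall i, i \notin T -> dl i = 0) -> \sum_i dl i *: g i = 0 -> 0 < dl i1 ->
  (forall i, 0 <= Cs i) -> (forall i, i \in T -> cone_bound_on g (T :\ i) (Cs i)) ->
  cone_bound_on g T (\sum_i Cs i).
Proof.
move=> dlT dl_g dl_i1 Cs_ge0 Cs_bound gam gam_ge0 gamT.
(* moving [gam] against [dl] by the least ratio [gam j / dl j] kills coefficient [j] *)
have [j dl_j j_min] := @arg_minP _ _ _ i1 (fun i => 0 < dl i) (fun i => gam i / dl i) dl_i1.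
set t := gam j / dl j.
pose gam1 i := gam i - t * dl i.
have jT : j \in T by apply: contraLR dl_j => /dlT ->; rewrite ltxx.
have gam1_ge0 i : 0 <= gam1 i.
  rewrite /gam1 subr_ge0; have [dl_i|dl_i] := ltrP 0 (dl i).
    by rewrite -ler_pdivlMr // j_min.
  by apply: le_trans (gam_ge0 i); rewrite mulr_ge0_le0 // divr_ge0 // ltW.
have gam1T i : i \notin T :\ j -> gam1 i = 0.
  rewrite /gam1 in_setD1 negb_and negbK => /orP[/eqP ->|iT].
    by rewrite /t divfK ?subrr // gt_eqF.
  by rewrite gamT // dlT // mulr0 subrr.
have gam1_g : \sum_i gam1 i *: g i = \sum_i gam i *: g i.
  rewrite (eq_bigr (fun i => gam i *: g i - t *: (dl i *: g i))); last first.
    by move=> i _; rewrite scalerBl scalerA.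
  by rewrite sumrB -scaler_sumr dl_g scaler0 subr0.
have [gam' [gam'_ge0 [gam'T [gam'_g gam'_le]]]] := Cs_bound j jT gam1 gam1_ge0 gam1T.
exists gam'; split=> //; split.
  by move=> i iT; apply: gam'T; rewrite in_setD1 (negbTE iT) andbF.
split; first by rewrite gam'_g gam1_g.
apply: (le_trans gam'_le); rewrite gam1_g ler_wpM2r //.
by rewrite (bigD1 j) //= lerDl sumr_ge0.
Qed.

Lemma cone_bound_on_exists N (g : 'I_N -> 'rV[R]_m) (T : {set 'I_N}) :
  exists C, 0 <= C /\ cone_bound_on g T C.
Proof.
move Hk: #|T| => k; elim/ltn_ind: k T Hk => k IH T Hk.
have [[dl [dlT [dl_g [i0 dl_i0]]]]|free_T] := pselect (exists dl : 'I_N -> R,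
   (forall i, i \notin T -> dl i = 0) /\ \sum_i dl i *: g i = 0 /\ exists i, dl i != 0);
  last first.
  apply: cone_bound_on_free => dl dlT dl_g i; apply: contra_notP free_T => dl_i.
  by exists dl; split=> //; split=> //; exists i; apply/eqP.
have [dl' [dl'T [dl'_g dl'_i0]]] : exists dl' : 'I_N -> R,
    (forall i, i \notin T -> dl' i = 0) /\ \sum_i dl' i *: g i = 0 /\ 0 < dl' i0.
  have [dl_neg|dl_pos|dl0] := ltrgtP (dl i0) 0; last by rewrite dl0 eqxx in dl_i0.
    exists (fun i => - dl i); split; first by move=> i /dlT ->; rewrite oppr0.
    split; last by rewrite oppr_gt0.
    by under eq_bigr do rewrite scaleNr; rewrite sumrN dl_g oppr0.
  by exists dl.
have drop_bound i : exists C, 0 <= C /\ (i \in T -> cone_bound_on g (T :\ i) C).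
  case iT: (i \in T); last by exists 0.
  have [|C [C_ge0 HC]] := IH #|T :\ i| _ (T :\ i) erefl.
    by rewrite -Hk (cardsD1 i T) iT.
  by exists C.
have [Cs Cs_spec] := choice drop_bound.
exists (\sum_i Cs i); split; first by apply: sumr_ge0 => i _; case: (Cs_spec i).
apply: (cone_bound_on_kernel dl'T dl'_g dl'_i0) => i; first by case: (Cs_spec i).
by case: (Cs_spec i) => _; apply.
Qed.

Lemma cone_bound N (g : 'I_N -> 'rV[R]_m) :
  exists C, 0 <= C /\ forall u, in_cone g u ->
    exists gam, (forall i, 0 <= gam i) /\ u = \sum_i gam i *: g i /\
                \sum_i gam i <= C * `|u|.
Proof.
have [C [C_ge0 HC]] := cone_bound_on_exists g [set: 'I_N].
exists C; split=> // _ [mu [mu_ge0 ->]].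
have [|gam [gam_ge0 [_ [gam_mu gam_le]]]] := HC mu mu_ge0; last by exists gam; rewrite gam_mu.
by move=> i; rewrite finset.in_setT.
Qed.

End Cones.

Lemma finite_set_enum (T : eqType) (A : set T) : finite_set A ->
  exists N (q : 'I_N -> T), (forall i, A (q i)) /\ forall a, A a -> exists i, q i = a.
Proof.
move=> /finite_seqP[s ->]; exists (size s), (tnth (in_tuple s)); split.
  by move=> i /=; rewrite mem_tnth.
by move=> a /= /(tnthP (in_tuple s))[i ->]; exists i.
Qed.

Lemma finite_argmax (R : realType) (T : eqType) (A : set T) (F : T -> R) :
  finite_set A -> A !=set0 -> exists2 a, A a & forall b, A b -> F b <= F a.
Proof.
move=> /finite_seqP[s ->] [a0]; elim: s a0 => // x s IH a0 _.
have [[b sb]|s0] := pselect (exists b, b \in s).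
  have [a sa a_max] := IH b sb.
  have [Fxa|Fax] := lerP (F x) (F a).
    exists a => [|c]; first by rewrite /= inE sa orbT.
    by rewrite /= inE => /orP[/eqP ->|/a_max].
  exists x => [|c]; first by rewrite /= mem_head.
  by rewrite /= inE => /orP[/eqP ->//|/a_max /le_trans]; apply; apply: ltW.
exists x => [|c]; first by rewrite /= mem_head.
by rewrite /= inE => /orP[/eqP ->//|cs]; case: s0; exists c.
Qed.

Lemma count_subpred_lt (T : eqType) (a b : pred T) (s : seq T) :
  (forall x, a x -> b x) -> (exists x, x \in s /\ b x /\ ~~ a x) ->
  (count a s < count b s)%N.
Proof.
move=> ab; elim: s => [[x []]|y s IH [x [xs [bx nax]]]] //.
rewrite /=; move: xs; rewrite inE => /orP[/eqP exy|xs].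
  subst y; rewrite (negbTE nax) bx add0n add1n ltnS.
  by apply: sub_count => z; apply: ab.
have := IH (ex_intro _ x (conj xs (conj bx nax))).
case ay: (a y); first by rewrite (ab _ ay) ltn_add2l.
by move=> h; rewrite add0n; apply: leq_trans h _; apply: leq_addl.
Qed.

Section Polytopes.
Variables (R : realType) (n : nat).
Implicit Types (A B Pts F G : set 'rV[R]_n).

Lemma pconv_pt A x : A x -> pconv A x.
Proof.
move=> Ax; exists 1%N, (fun=> 1), (fun=> x); split=> //; split; first by rewrite big_ord1.
by split=> //; rewrite big_ord1 scale1r.
Qed.

Lemma paff_pt A x : A x -> paff A x.
Proof.
move=> Ax; exists 1%N, (fun=> 1), (fun=> x); split; first by rewrite big_ord1.
by split=> //; rewrite big_ord1 scale1r.
Qed.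

Lemma exists_pos_weight k (w : 'I_k -> R) :
  (forall i, 0 <= w i) -> \sum_i w i = 1 -> exists i, 0 < w i.
Proof.
move=> w_ge0 w1; apply: contrapT => no_pos.
have : \sum_i w i = 0.
  apply: big1 => i _; apply/eqP; rewrite eq_le w_ge0 andbT leNgt; apply/negP => w_i.
  by apply: no_pos; exists i.
by rewrite w1 => /eqP; rewrite oner_eq0.
Qed.

Lemma pconv_nonempty A x : pconv A x -> A !=set0.
Proof.
move=> [k [w [p [w_ge0 [w1 [pA _]]]]]].
by have [i _] := exists_pos_weight w_ge0 w1; exists (p i).
Qed.

Lemma paff_nonempty A x : paff A x -> A !=set0.
Proof.
move=> [[|k] [w [p [w1 [pA _]]]]]; last by exists (p ord0).
by move: w1; rewrite big_ord0 => /eqP; rewrite eq_sym oner_eq0.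
Qed.

Lemma pconv_sub A B : A `<=` B -> pconv A `<=` pconv B.
Proof.
move=> AB _ [k [w [p [w_ge0 [w1 [pA ->]]]]]]; exists k, w, p.
by split=> //; split=> //; split=> // i; exact/AB/pA.
Qed.

Lemma pconv_pos_support A k (w : 'I_k -> R) p :
  (forall i, 0 <= w i) -> \sum_i w i = 1 -> (forall i, 0 < w i -> A (p i)) ->
  pconv A (\sum_i w i *: p i).
Proof.
move=> w_ge0 w1 pA; have [i1 w_i1] := exists_pos_weight w_ge0 w1.
exists k, w, (fun i => if 0 < w i then p i else p i1); split=> //; split=> //; split.
  by move=> i; case: ifP => [/pA|_]; last exact: pA.
apply: eq_bigr => i _; case: ifP => // /negbT; rewrite -leNgt => w_i.
have -> : w i = 0 by apply/eqP; rewrite eq_le w_i w_ge0.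
by rewrite !scale0r.
Qed.

Lemma pconv_cat A k1 k2 (w1 : 'I_k1 -> R) p1 (w2 : 'I_k2 -> R) p2 :
  (forall i, 0 <= w1 i) -> (forall i, 0 <= w2 i) -> \sum_i w1 i + \sum_i w2 i = 1 ->
  (forall i, A (p1 i)) -> (forall i, A (p2 i)) ->
  pconv A (\sum_i w1 i *: p1 i + \sum_i w2 i *: p2 i).
Proof.
move=> w1_ge0 w2_ge0 w_sum pA1 pA2.
pose w i := match fintype.split i with inl j => w1 j | inr j => w2 j end.
pose p i := match fintype.split i with inl j => p1 j | inr j => p2 j end.
have E1 j : fintype.split (lshift k2 j) = inl j := unsplitK (inl j).
have E2 j : fintype.split (rshift k1 j) = inr j := unsplitK (inr j).
exists (k1 + k2)%N, w, p; split; first by move=> i; rewrite /w; case: fintype.split.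
split.
  by rewrite big_split_ord -w_sum; congr (_ + _); apply: eq_bigr => j _; rewrite /w ?E1 ?E2.
split; first by move=> i; rewrite /p; case: fintype.split.
by rewrite big_split_ord; congr (_ + _); apply: eq_bigr => j _; rewrite /w /p ?E1 ?E2.
Qed.

Lemma pface_of_bound Pts (c : 'rV[R]_n) d : (forall v, Pts v -> pdot c v <= d) ->
  is_pface (pconv Pts) [set x | pconv Pts x /\ pdot c x = d].
Proof.
move=> c_le; exists c, d; split=> // _ [k [w [p [w_ge0 [w1 [pP ->]]]]]].
by apply: pdot_comb_le => // i; apply: c_le.
Qed.

Lemma pface_comb_support Pts F k (w : 'I_k -> R) (p : 'I_k -> 'rV[R]_n) :
  is_pface (pconv Pts) F -> (forall i, 0 <= w i) -> \sum_i w i = 1 ->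
  (forall i, Pts (p i)) -> F (\sum_i w i *: p i) -> forall i, 0 < w i -> F (p i).
Proof.
move=> [c [d [c_le ->]]] w_ge0 w1 pP [_ cx] i w_i; split; first exact: pconv_pt.
by apply: (pdot_comb_eq_bound w_ge0 w1 _ cx w_i) => j; apply/c_le/pconv_pt.
Qed.

Lemma pface_pconv_vertices Pts F : is_pface (pconv Pts) F -> F `<=` pconv (Pts `&` F).
Proof.
move=> HF x Fx.
have [k [w [p [w_ge0 [w1 [pP x_def]]]]]] : pconv Pts x by case: HF Fx => c [d [_ ->]] [].
rewrite x_def in Fx *; apply: pconv_pos_support => // i w_i.
by split; [exact: pP|exact: (pface_comb_support HF w_ge0 w1 pP Fx w_i)].
Qed.

Lemma pface_pconv_sub Pts F : is_pface (pconv Pts) F -> pconv (Pts `&` F) `<=` F.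
Proof.
move=> [c [d [c_le F_def]]] _ [k [w [p [w_ge0 [w1 [pPF ->]]]]]].
have pP i : Pts (p i) by case: (pPF i).
have cp i : pdot c (p i) = d by case: (pPF i) => _; rewrite F_def => -[].
by rewrite F_def; split; [exists k, w, p|exact: pdot_comb_const].
Qed.

Lemma pface_sub Pts F G : is_pface (pconv Pts) F -> is_pface (pconv Pts) G ->
  (forall v, Pts v -> G v -> F v) -> G `<=` F.
Proof.
move=> HF HG GF x /(pface_pconv_vertices HG) Gx; apply: (pface_pconv_sub HF).
by apply: (pconv_sub _ Gx) => v [Pv Gv]; split=> //; exact: GF.
Qed.

Lemma pconv_pface_disjoint Pts A G : is_pface (pconv Pts) G -> A `<=` Pts ->
  (forall v, A v -> ~ G v) -> pconv A `&` G = set0.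
Proof.
move=> HG AP AG; apply/seteqP; split=> // _ [[k [w [p [w_ge0 [w1 [pA ->]]]]]] Gx].
have [i w_i] := exists_pos_weight w_ge0 w1.
by apply: (AG _ (pA i)); apply: (pface_comb_support HG w_ge0 w1 _ Gx w_i) => j; apply/AP/pA.
Qed.

Lemma dfaces_exists_sup Pts D F : finite_set Pts ->
  is_pface (pconv Pts) F -> D `&` F = set0 -> exists2 H, dfaces Pts D H & F `<=` H.
Proof.
move=> /finite_seqP[ps Pts_ps] HF DF.
move Hc: (count (fun v => v \notin F) ps) => k.
elim/ltn_ind: k F HF DF Hc => k IH F HF DF Hc.
have [F_max|] := pselect (forall G, is_pface (pconv Pts) G -> D `&` G = set0 -> F `<=` G -> G = F).
  by exists F.
move/existsNP=> [G /not_implyP [HG /not_implyP [DG /not_implyP [FG GF]]]].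
have [[v [v_ps [Gv Fv]]]|G_new] := pselect (exists v, v \in ps /\ G v /\ ~ F v).
  have lt_count : (count (fun v => v \notin G) ps < k)%N.
    rewrite -Hc; apply: count_subpred_lt.
      by move=> x /negP nG; apply/negP; rewrite in_setE => /FG; rewrite -in_setE.
    by exists v; do !split=> //; [apply/negP; rewrite in_setE|rewrite negbK in_setE].
  have [H dH GH] := IH _ lt_count G HG DG erefl.
  by exists H => // x /FG /GH.
exfalso; apply: GF; apply/seteqP; split=> //.
apply: (pface_sub HF HG) => v Pv Gv; apply: contrapT => Fv.
by apply: G_new; exists v; split=> //; move: Pv; rewrite Pts_ps.
Qed.

Lemma dfaces_eq_of_face Pts D W W' G : finite_set Pts ->
  (forall F F', dfaces Pts D F -> dfaces Pts D F' -> F <> F' -> F `&` F' = set0) ->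
  D = pconv (Pts `\` \bigcup_(F in dfaces Pts D) F) ->
  dfaces Pts D W -> dfaces Pts D W' -> is_pface (pconv Pts) G ->
  (forall v, Pts v -> G v -> W v \/ W' v) ->
  (G `&` W) !=set0 -> (G `&` W') !=set0 -> W = W'.
Proof.
move=> Pts_fin disj D_def HW HW' HG G_WW' [x [Gx Wx]] [x' [Gx' W'x']].
have DG : D `&` G = set0.
  rewrite D_def; apply: (pconv_pface_disjoint HG) => [v []//|v [Pv vD] Gv].
  by apply: vD; case: (G_WW' v Pv Gv) => [Wv|W'v]; [exists W|exists W'].
have [H HH GH] := dfaces_exists_sup Pts_fin HG DG.
have H_eq F y : dfaces Pts D F -> G y -> F y -> H = F.
  move=> HF Gy Fy; apply: contrapT => HF_neq.
  have := disj _ _ HH HF HF_neq; rewrite -subset0 => /(_ y); apply.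
  by split; [exact: GH|].
by rewrite -(H_eq W x) // (H_eq W' x').
Qed.

(* Adding to [c1] a multiple of [cg] tilts the supporting hyperplane of the
   face [c1 = d1] around [x0] until it meets the points of [S]. *)
Lemma exists_tilted_bound Pts S (c1 cg x0 : 'rV[R]_n) (d1 delta : R) :
  finite_set Pts -> (Pts `&` S) !=set0 -> 0 < delta -> pdot c1 x0 = d1 ->
  (forall v, Pts v -> pdot c1 v <= d1) ->
  (forall v, Pts v -> S v -> pdot c1 v < d1) ->
  (forall v, Pts v -> ~ S v -> pdot cg (v - x0) <= 0) ->
  (forall v, Pts v -> S v -> pdot cg (v - x0) = delta) ->
  exists c : 'rV[R]_n, (forall v, Pts v -> pdot c (v - x0) <= 0) /\
    (exists2 v, (Pts `&` S) v & pdot c (v - x0) = 0) /\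
    (forall v, Pts v -> pdot c (v - x0) = 0 -> S v \/ pdot c1 v = d1).
Proof.
move=> Pts_fin PS_ne delta_gt0 c1x0 c1_le c1_S cg_nS cg_S.
have [s [Ps Ss] s_max] := finite_argmax (pdot c1) (finite_setIl S Pts_fin) PS_ne.
set lam := (d1 - pdot c1 s) / delta.
have lam_gt0 : 0 < lam by rewrite divr_gt0 // subr_gt0; exact: c1_S.
have cE v : pdot (c1 + lam *: cg) (v - x0) = (pdot c1 v - d1) + lam * pdot cg (v - x0).
  by rewrite pdotDl pdotZl pdotBr c1x0.
have cS v : Pts v -> S v -> pdot (c1 + lam *: cg) (v - x0) = pdot c1 v - pdot c1 s.
  by move=> Pv Sv; rewrite cE cg_S // /lam divfK ?gt_eqF // addrA subrK.
exists (c1 + lam *: cg); split; [|split].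
- move=> v Pv; have [Sv|nSv] := pselect (S v).
    by rewrite cS // subr_le0; apply: s_max.
  rewrite cE -[0](addr0 0); apply: lerD; first by rewrite subr_le0 c1_le.
  by rewrite pmulr_rle0 // cg_nS.
- by exists s => //; rewrite cS // subrr.
- move=> v Pv c_v; have [Sv|nSv] := pselect (S v); [by left|right].
  have c1_v : pdot c1 v - d1 <= 0 by rewrite subr_le0 c1_le.
  have cg_v : lam * pdot cg (v - x0) <= 0 by rewrite pmulr_rle0 // cg_nS.
  move/eqP: c_v; rewrite cE addr_eq0 => /eqP c1_cg.
  by apply/eqP; rewrite -subr_eq0 eq_le c1_v c1_cg oppr_ge0 cg_v.
Qed.

End Polytopes.

Section Projection.
Variables (R : realType) (n m : nat) (f : {linear 'rV[R]_n -> 'rV[R]_m}).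
Variable pi : 'rV[R]_n -> 'rV[R]_m.
Hypothesis piB : forall x y, pi x - pi y = f (x - y).

Lemma proj_combB k (w : 'I_k -> R) (p : 'I_k -> 'rV[R]_n) x0 :
  \sum_i w i = 1 -> pi (\sum_i w i *: p i) - pi x0 = \sum_i w i *: (pi (p i) - pi x0).
Proof.
move=> w1; rewrite piB.
have -> : \sum_i w i *: p i - x0 = \sum_i w i *: (p i - x0).
  by rewrite (eq_bigr _ (fun i _ => scalerBr _ _ _)) sumrB -scaler_suml w1 scale1r.
by rewrite linear_sum; apply: eq_bigr => i _; rewrite linearZ /= piB.
Qed.

Lemma proj_cone_not_in_closure (P0 A : set 'rV[R]_n) N (q : 'I_N -> 'rV[R]_n) x0 :
  (forall i, A (q i)) -> pconv A x0 ->
  (forall v, P0 v -> in_cone (fun i => pi (q i) - pi x0) (pi v - pi x0)) ->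
  ~ closure (pi @` pconv P0 `\` pi @` pconv A) (pi x0).
Proof.
move=> qA [k [om [r [om_ge0 [om1 [rA x0_def]]]]]] P0_cone.
have [C [C_ge0 C_bound]] := cone_bound (fun i => pi (q i) - pi x0).
have eps_gt0 : 0 < (C + 1)^-1 by rewrite invr_gt0 ltr_wpDl.
move=> /(_ _ (nbhsx_ballx (pi x0) _ eps_gt0)) [_ [[[x P0x <-] x_notA] x_near]].
have x_cone : in_cone (fun i => pi (q i) - pi x0) (pi x - pi x0).
  case: P0x => k' [w [p [w_ge0 [w1 [pP0 ->]]]]].
  by rewrite proj_combB //; apply: in_cone_comb => // i; apply: P0_cone.
have [gam [gam_ge0 [x_gam gam_le]]] := C_bound _ x_cone.
have gam_le1 : \sum_i gam i <= 1.
  apply: (le_trans gam_le); move: x_near; rewrite -ball_normE /ball_ /= distrC.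
  move=> /ltW /(ler_wpM2l C_ge0) /le_trans; apply.
  by rewrite ler_pdivrMr ?ltr_wpDl // mul1r lerDl.
apply: x_notA; exists ((1 - \sum_i gam i) *: x0 + \sum_i gam i *: q i).
  rewrite x0_def scaler_sumr; under eq_bigr do rewrite scalerA.
  apply: pconv_cat => //; first by move=> j; apply: mulr_ge0; rewrite ?subr_ge0.
  by rewrite -mulr_sumr om1 mulr1 subrK.
apply: (@addIr _ (- pi x0)); rewrite x_gam piB.
have -> : (1 - \sum_i gam i) *: x0 + \sum_i gam i *: q i - x0 = \sum_i gam i *: (q i - x0).
  rewrite (eq_bigr _ (fun i _ => scalerBr _ _ _)) sumrB -scaler_suml scalerBl scale1r.
  by rewrite addrAC (addrAC x0) subrr add0r addrC.
by rewrite linear_sum; apply: eq_bigr => i _; rewrite linearZ /= piB.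
Qed.

End Projection.

Section DaughterProjection.
Variables (R : realType) (n m : nat) (Pts D S W W' : set 'rV[R]_n).
Variables (f : {linear 'rV[R]_n -> 'rV[R]_m}) (pi : 'rV[R]_n -> 'rV[R]_m).
Hypotheses (Pts_fin : finite_set Pts)
  (dfaces_disj : forall F F', dfaces Pts D F -> dfaces Pts D F' -> F <> F' -> F `&` F' = set0)
  (D_def : D = pconv (Pts `\` \bigcup_(F in dfaces Pts D) F))
  (W_dface : dfaces Pts D W) (W'_dface : dfaces Pts D W') (W'_neq : W' <> W)
  (S_face : is_pface (pconv Pts) S) (S_W : S `<=` W) (S_ne : S !=set0)
  (piB : forall x y, pi x - pi y = f (x - y)) (pi_S : forall v, S v -> pi v = 0).
Variables (N : nat) (q : 'I_N -> 'rV[R]_n) (w' : 'rV[R]_n).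
Hypotheses (q_in : forall i, (Pts `\` S) (q i))
  (q_onto : forall v, (Pts `\` S) v -> exists i, q i = v) (W'w' : W' w').

Lemma dface_S_disj v : W' v -> ~ S v.
Proof.
move=> W'v Sv; have := dfaces_disj W_dface W'_dface (nesym W'_neq).
by rewrite -subset0 => /(_ v); apply; split=> //; exact: S_W.
Qed.

Lemma proj_dface_cone_case : in_cone (fun i => pi (q i) - pi w') (- pi w') ->
  ~ closure (pi @` pconv Pts `\` pi @` pconv (Pts `\` S)) (pi w').
Proof.
move=> w'_cone; have [W'_face _] := W'_dface.
apply: (proj_cone_not_in_closure piB q_in).
  apply: (pconv_sub _ (pface_pconv_vertices W'_face W'w')) => v [Pv W'v].
  by split=> //; exact: dface_S_disj.
move=> v Pv; have [Sv|nSv] := pselect (S v); first by rewrite (pi_S Sv) sub0r.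
by have [i <-] := q_onto (conj Pv nSv); exact: in_cone_gen.
Qed.

Lemma proj_dface_separated_case (y : 'rV[R]_m) :
  (forall i, pdot y (pi (q i) - pi w') <= 0) -> ~ 0 < pdot y (- pi w').
Proof.
move=> y_q y_w'; have [[c1 [d1 [c1_le W'_def]]] _] := W'_dface.
have W'_eq v : W' v <-> pconv Pts v /\ pdot c1 v = d1 by rewrite W'_def.
have [_ c1w'] := (W'_eq w').1 W'w'.
have [cg cgE] := pdot_adjoint f y.
have cg_pi v : pdot cg (v - w') = pdot y (pi v - pi w') by rewrite cgE piB.
have PS_ne : (Pts `&` S) !=set0.
  by have [x Sx] := S_ne; exact: pconv_nonempty (pface_pconv_vertices S_face Sx).
have c1_S v : Pts v -> S v -> pdot c1 v < d1.
  move=> Pv Sv; rewrite lt_neqAle c1_le ?andbT; last exact: pconv_pt.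
  apply/eqP => c1v; apply: (@dface_S_disj v) => //.
  by apply/W'_eq; split=> //; exact: pconv_pt.
have cg_nS v : Pts v -> ~ S v -> pdot cg (v - w') <= 0.
  by move=> Pv nSv; have [i <-] := q_onto (conj Pv nSv); rewrite cg_pi.
have cg_S v : Pts v -> S v -> pdot cg (v - w') = pdot y (- pi w').
  by move=> _ Sv; rewrite cg_pi pi_S // sub0r.
have [c [c_le [[s [Ps Ss] c_s] c_eq]]] := exists_tilted_bound Pts_fin PS_ne y_w' c1w'
  (fun v Pv => c1_le v (pconv_pt Pv)) c1_S cg_nS cg_S.
have c_le' v : Pts v -> pdot c v <= pdot c w' by move=> Pv; rewrite -subr_le0 -pdotBr c_le.
apply: W'_neq; symmetry.
apply: (dfaces_eq_of_face Pts_fin dfaces_disj D_def W_dface W'_dface (pface_of_bound c_le')).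
- move=> v Pv [_ cv]; have [|Sv|c1v] := c_eq v Pv; first by rewrite pdotBr cv subrr.
    by left; exact: S_W.
  by right; apply/W'_eq; split=> //; exact: pconv_pt.
- exists s; split; last exact: S_W.
  by split; [exact: pconv_pt|apply/eqP; rewrite -subr_eq0 -pdotBr c_s].
- by exists w'; split=> //; split; [exact: ((W'_eq w').1 W'w').1|].
Qed.

End DaughterProjection.

Theorem lemma4p2 (R : realType) (n : nat) (Pts : set 'rV[R]_n)
    (D W S : set 'rV[R]_n) (m : nat) (pi : 'rV[R]_n -> 'rV[R]_m) :
  finite_set Pts ->
  (forall p, Pts p -> forall i, p 0 i \is a Num.int) ->
  is_daughter Pts D ->
  dfaces Pts D W ->
  is_pface (pconv Pts) S ->
  S `<=` W ->
  quot_proj S pi ->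
  forall W', dfaces Pts D W' -> W' <> W ->
    (pi @` W') `&` PS_set Pts S pi = set0.
Proof.
move=> Pts_fin _ [_ [_ [dfaces_disj D_def]]] W_dface S_face S_W
  [f [s [Ss [_ [f_ker pi_def]]]]] W' W'_dface W'_neq.
have piB x y : pi x - pi y = f (x - y).
  by rewrite !pi_def -linearB /= opprB addrA subrK.
have pi_S v : S v -> pi v = 0.
  by move=> Sv; rewrite pi_def; apply/f_ker; exists v; [exact: paff_pt|exists s].
have S_ne := paff_nonempty Ss.
have [N [q [q_in q_onto]]] := finite_set_enum (finite_setD S Pts_fin).
apply/seteqP; split=> // _ [[w' W'w' <-] [_ w'_cl]].
have [w'_cone|[y [y_q y_w']]] := farkas (fun i => pi (q i) - pi w') (- pi w').
  exact: (proj_dface_cone_case dfaces_disj W_dface W'_dface W'_neq S_W piB pi_S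
            q_in q_onto W'w' w'_cone w'_cl).
exact: (proj_dface_separated_case Pts_fin dfaces_disj D_def W_dface W'_dface W'_neq
          S_face S_W S_ne piB pi_S q_onto W'w' y_q y_w').
Qed.
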